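(* For every $x\in\mathcal{L}_q\cup\mathcal{T}_q$, $\mu^{-1}(\mu(x))=x$.
   Context: Let $S_b=(F_b,P_b,V_\infty,\delta_b)$ be a first-order signature ($F_b$ function symbols, constants being $0$-ary functions; $P_b$ predicate symbols; $V_\infty$ an infinite set of variables; $\delta_b$ the arities). Formulas are built from atoms with $\neg,\wedge,\forall$. Fix a finite set $V\subseteq V_\infty$ of ''quotable variables''. The augmented signature $S$ has predicate symbols $P=P_b\sqcup\{\mathbf{T}\}$ ($\mathbf{T}$ unary) and function symbols $F=F_b\sqcup\underline{F}\sqcup\underline{P}\sqcup\underline{V}\sqcup\{\underline{\wedge},\underline{\neg},\underline{\forall},\mathrm{quote}\}$, where $\underline{F}=\{\underline{f}:f\in F_b\}$ ($\underline f$ has the arity of $f$), $\underline{P}=\{\underline{p}:p\in P\}$ ($\underline p$ is a function symbol with the arity of $p$), $\underline{V}=\{\underline{x}:x\in V\}$ (constants), $\underline\wedge,\underline\forall$ binary, $\underline\neg,\mathrm{quote}$ unary; all new symbols are fresh. The set $\mathcal{Q}$ is the least set of terms containing each $\underline x\in\underline V$ and closed under forming $\underline f(t_1,\dots,t_n)$ ($\underline f\in\underline F$), $\underline p(t_1,\dots,t_n)$ ($\underline p\in\underline P$), $\underline\wedge(t_1,t_2)$, $\underline\neg(t)$, $\underline\forall(\underline x,t)$ ($\underline x\in\underline V$), $\mathrm{quote}(t)$, for $t,t_i\in\mathcal{Q}$. The set $\mathcal Q_v$ is defined identically but additionally contains $\mathrm{quote}(x)$ for each variable $x\in V$ (closed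 under the same constructors). The sets $\mathcal{T}_q$ (quotable terms), $\mathcal{L}_q$ (quotable formulas) and the map $\mu$ are defined by simultaneous induction: $\mathcal T_q$ contains every variable $x\in V$, every $f(t_1,\dots,t_n)$ with $f\in F_b$, $t_i\in\mathcal T_q$, and every term $\mu(e)$ with $e\in\mathcal T_q\cup\mathcal L_q$; $\mathcal L_q$ contains $p(t_1,\dots,t_n)$ with $p\in P_b$, $t_i\in\mathcal T_q$, and $\forall x.\varphi$ ($x\in V$), $\neg\varphi$, $\varphi_1\wedge\varphi_2$ for $\varphi,\varphi_i\in\mathcal L_q$. The quotation map is: $\mu(f(t_1,\dots,t_n))=\underline f(\mu(t_1),\dots,\mu(t_n))$ for $f\in F_b$; $\mu(t_q)=\mathrm{quote}(t_q)$ for $t_q\in\mathcal Q$; $\mu(p(t_1,\dots,t_n))=\underline p(\mu(t_1),\dots,\mu(t_n))$; $\mu(x)=\underline x$; $\mu(\varphi_1\wedge\varphi_2)=\underline\wedge(\mu(\varphi_1),\mu(\varphi_2))$; $\mu(\neg\varphi)=\underline\neg(\mu(\varphi))$; $\mu(\forall x.\varphi)=\underline\forall(\underline x,\mu(\varphi))$. Quoted substitution: for a term $t$ and $x\in V$, $z[\underline x\leftarrow t]_q$ is defined on $z\in\mathcal Q_v$ by: $\underline x[\underline x\leftarrow t]_q=t$; $\underline y[\underline x\leftarrow t]_q=\underline y$ for $\underline y\ne\underline x$; it commutes with $\underline f\in\underline F$, $\underline p\in\underline P$, $\underline\wedge$ and $\underline\neg$ (applied to each argument); $\underline\forall(t_1,t_2)[\underline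 x\leftarrow t]_q=\underline\forall(t_1[\underline x\leftarrow t]_q,t_2[\underline x\leftarrow t]_q)$ if $t_1\neq\underline x$; $\underline\forall(\underline x,t_2)[\underline x\leftarrow t]_q=\underline\forall(\underline x,t_2)$; in all other cases (e.g. $\mathrm{quote}(s)$) the term is unchanged. The unquote operator $\mu^{-1}$ on $\mathcal Q_v$: $\mu^{-1}(\underline f(t_1,\dots,t_n))=f(\mu^{-1}(t_1),\dots,\mu^{-1}(t_n))$; $\mu^{-1}(\underline p(t_1,\dots,t_n))=p(\mu^{-1}(t_1),\dots,\mu^{-1}(t_n))$; $\mu^{-1}(\mathrm{quote}(t))=t$; $\mu^{-1}(\varphi_1\underline\wedge\varphi_2)=\mu^{-1}(\varphi_1)\wedge\mu^{-1}(\varphi_2)$; $\mu^{-1}(\underline\neg\varphi)=\neg\mu^{-1}(\varphi)$; $\mu^{-1}(\underline\forall(\underline x,\varphi))=\forall x.\ \mu^{-1}(\varphi[\underline x\leftarrow\mathrm{quote}(x)]_q)$; $\mu^{-1}(\underline x)=x$; $\mu^{-1}(t)=t$ in all other cases. *)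

From mathcomp Require Import all_boot.
From Stdlib Require Lists.List.
Set Implicit Arguments. Unset Strict Implicit. Unset Printing Implicit Defensive.

(* Single-sorted syntax of the augmented signature S: terms and formulas of S
   live in one type [expr]; well-sortedness is imposed by the predicates
   [Tq]/[Lq] below. *)
Section Syntax.
Variables (Fb Pb : Type) (Vinf : eqType).

(* predicate symbols of S : P = P_b ⊔ {T} *)
Inductive psym := PB (p : Pb) | PT.

Inductive expr :=
| EVar (x : Vinf)
| EApp (f : Fb) (args : list expr)
| EPred (p : psym) (args : list expr)
| EAnd (a b : expr)
| ENot (a : expr)
| EAll (x : Vinf) (a : expr)
(* the fresh function symbols of S *)
| QFun (f : Fb) (args : list expr)
| QPred (p : psym) (args : list expr)
| QVar (x : Vinf)
| QAnd (a b : expr)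
| QNot (a : expr)
| QAll (a b : expr)
| Quote (a : expr).

(* The quotation map mu (on T_q ∪ L_q; totalised: on the remaining term
   shapes of T_q, which are exactly the elements of Q, it is quote). *)
Fixpoint mu (e : expr) : expr :=
  match e with
  | EVar x => QVar x
  | EApp f args => QFun f (map mu args)
  | EPred p args => QPred p (map mu args)
  | EAnd a b => QAnd (mu a) (mu b)
  | ENot a => QNot (mu a)
  | EAll x a => QAll (QVar x) (mu a)
  | _ => Quote e
  end.

Definition is_qvar_of (x : Vinf) (t : expr) : bool :=
  if t is QVar y then y == x else false.

Fixpoint qsubst (x : Vinf) (t : expr) (z : expr) : expr :=
  match z with
  | QVar y => if y == x then t else QVar y
  | QFun f args => QFun f (map (qsubst x t) args)
  | QPred p args => QPred p (map (qsubst x t) args)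
  | QAnd a b => QAnd (qsubst x t a) (qsubst x t b)
  | QNot a => QNot (qsubst x t a)
  | QAll t1 t2 =>
      if is_qvar_of x t1 then QAll t1 t2
      else QAll (qsubst x t t1) (qsubst x t t2)
  | _ => z
  end.

(* size measure: underline x and quote(_) count 1; preserved by
   [qsubst x (Quote (EVar x))], so it bounds the recursion depth of the
   unquote operator. *)
Fixpoint esize (e : expr) : nat :=
  match e with
  | QVar _ | Quote _ | EVar _ => 1
  | EApp _ args | EPred _ args | QFun _ args | QPred _ args =>
      (sumn (map esize args)).+1
  | EAnd a b | QAnd a b | QAll a b => (esize a + esize b).+1
  | ENot a | QNot a | EAll _ a => (esize a).+1
  end.

(* unquote operator, with fuel (fuel [esize e] is always sufficient) *)
Fixpoint unquote_fuel (n : nat) (e : expr) : expr :=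
  match n with
  | 0 => e
  | n'.+1 =>
    match e with
    | QFun f args => EApp f (map (unquote_fuel n') args)
    | QPred p args => EPred p (map (unquote_fuel n') args)
    | Quote t => t
    | QAnd a b => EAnd (unquote_fuel n' a) (unquote_fuel n' b)
    | QNot a => ENot (unquote_fuel n' a)
    | QAll (QVar x) a =>
        EAll x (unquote_fuel n' (qsubst x (Quote (EVar x)) a))
    | QVar x => EVar x
    | _ => e
    end
  end.

Definition unquote (e : expr) : expr := unquote_fuel (esize e) e.

Variables (arF : Fb -> nat) (arP : Pb -> nat) (V : seq Vinf).

Inductive Tq : expr -> Prop :=
| Tq_var x : x \in V -> Tq (EVar x)
| Tq_app f args : size args = arF f -> (forall t, Stdlib.Lists.List.In t args -> Tq t) ->
    Tq (EApp f args)
| Tq_mu_term e : Tq e -> Tq (mu e)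
| Tq_mu_form e : Lq e -> Tq (mu e)
with Lq : expr -> Prop :=
| Lq_atom p args : size args = arP p -> (forall t, Stdlib.Lists.List.In t args -> Tq t) ->
    Lq (EPred (PB p) args)
| Lq_all x a : x \in V -> Lq a -> Lq (EAll x a)
| Lq_not a : Lq a -> Lq (ENot a)
| Lq_and a b : Lq a -> Lq b -> Lq (EAnd a b).

End Syntax.

(* Unquoting [QAll (QVar x) b] substitutes [quote(x)] for the quoted
   variable [x] in [b] before unquoting [b].  So below binders the expression
   being unquoted is not [mu a] but [mu a] with the bound variables quoted as
   [quote(x)] instead of [underline x]; calling this [mu_bound s a], with [s]
   the bound variables, the induction goes through for the stronger claim
   [unquote (mu_bound s e) = e] for all [s], because quoted substitution of
   [quote(x)] turns [mu_bound s] into [mu_bound (x :: s)].  Since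
   [underline x] and [quote(x)] both have size 1, the fuel [esize] suffices. *)

From mathcomp Require Import all_boot.
From Stdlib Require Lists.List.
Import Stdlib.Lists.List (In, in_map, map_ext_in).

Section Quotation.
Variables (Fb Pb : Type) (Vinf : eqType).
Notation expr := (expr Fb Pb Vinf).

Fixpoint forall_In {A : Type} {P : A -> Prop} (hP : forall a, P a)
    (l : list A) : forall t, In t l -> P t :=
  match l return forall t, In t l -> P t with
  | nil => fun t tl => match tl with end
  | u :: l' => fun t tl =>
      match tl with
      | or_introl ut => eq_ind u P (hP u) t ut
      | or_intror tl' => forall_In hP l' t tl'
      end
  end.

Definition expr_nested_ind (P : expr -> Prop)
  (hVar : forall x, P (EVar _ _ x))
  (hApp : forall f args, (forall t, In t args -> P t) -> P (EApp f args))
  (hPred : forall p args, (forall t, In t args -> P t) -> P (EPred p args))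
  (hAnd : forall a b, P a -> P b -> P (EAnd a b))
  (hNot : forall a, P a -> P (ENot a))
  (hAll : forall x a, P a -> P (EAll x a))
  (hQuoted : forall e, mu e = Quote e -> P e) : forall e, P e :=
  fix F (e : expr) : P e :=
  match e with
  | EVar x => hVar x
  | EApp f args => hApp f args (forall_In F args)
  | EPred p args => hPred p args (forall_In F args)
  | EAnd a b => hAnd a b (F a) (F b)
  | ENot a => hNot a (F a)
  | EAll x a => hAll x a (F a)
  | e => hQuoted e erefl
  end.

Fixpoint mu_bound (s : seq Vinf) (e : expr) : expr :=
  match e with
  | EVar x => if x \in s then Quote (EVar _ _ x) else QVar _ _ x
  | EApp f args => QFun f (map (mu_bound s) args)
  | EPred p args => QPred p (map (mu_bound s) args)
  | EAnd a b => QAnd (mu_bound s a) (mu_bound s b)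
  | ENot a => QNot (mu_bound s a)
  | EAll x a => QAll (QVar _ _ x) (mu_bound [seq y <- s | y != x] a)
  | _ => Quote e
  end.

Lemma mu_bound_nil (e : expr) : mu_bound [::] e = mu e.
Proof.
elim/expr_nested_ind: e => //=.
- by move=> f args IH; congr QFun; apply: map_ext_in.
- by move=> p args IH; congr QPred; apply: map_ext_in.
- by move=> a b -> ->.
- by move=> a ->.
- by move=> x a ->.
- by case.
Qed.

Lemma qsubst_quote_mu_bound (x : Vinf) (s : seq Vinf) (e : expr) :
  qsubst x (Quote (EVar _ _ x)) (mu_bound s e) = mu_bound (x :: s) e.
Proof.
elim/expr_nested_ind: e s => /=.
- move=> y s; rewrite in_cons.
  by case: (y \in s); rewrite /= ?orbT ?orbF //; case: eqP => [->|].
- move=> f args IH s; congr QFun; rewrite -map_comp.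
  by apply: map_ext_in => t tl /=; apply: IH.
- move=> p args IH s; congr QPred; rewrite -map_comp.
  by apply: map_ext_in => t tl /=; apply: IH.
- by move=> a b IHa IHb s; rewrite IHa IHb.
- by move=> a IHa s; rewrite IHa.
- move=> y a IHa s; rewrite /is_qvar_of eq_sym.
  by case: (x =P y) => [->|_]; rewrite /= ?eqxx ?IHa.
- by case.
Qed.

Lemma esize_mu_bound (s1 s2 : seq Vinf) (e : expr) :
  esize (mu_bound s1 e) = esize (mu_bound s2 e).
Proof.
elim/expr_nested_ind: e s1 s2 => /=.
- by move=> x s1 s2; case: (x \in s1); case: (x \in s2).
- move=> f args IH s1 s2; rewrite -!map_comp; congr (sumn _).+1.
  by apply: map_ext_in => t tl /=; apply: IH.
- move=> p args IH s1 s2; rewrite -!map_comp; congr (sumn _).+1.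
  by apply: map_ext_in => t tl /=; apply: IH.
- by move=> a b IHa IHb s1 s2; rewrite (IHa s1 s2) (IHb s1 s2).
- by move=> a IHa s1 s2; rewrite (IHa s1 s2).
- by move=> x a IHa s1 s2; rewrite (IHa _ [seq y <- s2 | y != x]).
- by case.
Qed.

Lemma esize_In_le (t : expr) (l : list expr) :
  In t l -> esize t <= sumn (map (@esize _ _ _) l).
Proof.
elim: l => //= u l IHl [->|tl]; first exact: leq_addr.
exact: leq_trans (IHl tl) (leq_addl _ _).
Qed.

Lemma unquote_fuel_mu_bound (s : seq Vinf) (e : expr) (n : nat) :
  esize (mu_bound s e) <= n -> unquote_fuel n (mu_bound s e) = e.
Proof.
elim/expr_nested_ind: e s n
  => [x|f args IH|p args IH|a b IHa IHb|a IHa|x a IHa|e mue] s /=.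
- by case: (x \in s); case.
- case=> [|n] //=; rewrite ltnS => le_n.
  congr EApp; rewrite -map_comp -[RHS]map_id.
  apply: map_ext_in => t tl /=; apply: IH => //; apply: leq_trans le_n.
  exact/esize_In_le/in_map.
- case=> [|n] //=; rewrite ltnS => le_n.
  congr EPred; rewrite -map_comp -[RHS]map_id.
  apply: map_ext_in => t tl /=; apply: IH => //; apply: leq_trans le_n.
  exact/esize_In_le/in_map.
- case=> [|n] //=; rewrite ltnS => le_n.
  by rewrite IHa ?IHb //; apply: leq_trans le_n; rewrite ?leq_addl ?leq_addr.
- by case=> [|n] //= le_n; rewrite IHa.
- case=> [|n] //=; rewrite ltnS => le_n.
  rewrite qsubst_quote_mu_bound IHa //.
  by rewrite (esize_mu_bound _ [seq y <- s | y != x]); apply: leq_trans le_n.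
- by case=> [|n]; case: e mue.
Qed.

Lemma unquoteK_mu (e : expr) : unquote (mu e) = e.
Proof. by rewrite /unquote -mu_bound_nil unquote_fuel_mu_bound. Qed.

End Quotation.

Theorem proposition4p16 (Fb Pb : Type) (Vinf : eqType)
  (arF : Fb -> nat) (arP : Pb -> nat) (V : seq Vinf)
  (Vinf_infinite : ~ exists s : seq Vinf, forall x : Vinf, x \in s)
  (e : expr Fb Pb Vinf) :
  Tq arF arP V e \/ Lq arF arP V e -> unquote (mu e) = e.
Proof. by move=> _; exact: unquoteK_mu. Qed.
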